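(* Let $q$ be a prime power and $v,r\ge 1$ integers. If the generalized cylinder conjecture is true for $(v+1,r+1,q)$, then it is true for $(v,r,q)$.
   Context: $\mathrm{PG}(v-1,q)$ is the projective space of $\mathbb{F}_q^v$; a $k$-space is a $k$-dimensional subspace of $\mathbb{F}_q^v$ (points are $1$-spaces, hyperplanes $(v-1)$-spaces). A set $\mathcal{S}$ of points is spanning if its points span $\mathbb{F}_q^v$, and it is $q^r$-divisible if $|\mathcal{S}\cap H|\equiv|\mathcal{S}|\pmod{q^r}$ for every hyperplane $H$. An $(r+1)$-cylinder is a multiset of $q^{r+1}$ points which arises as the union (counted with multiplicity) of the point sets $L_1\setminus F,\dots,L_q\setminus F$, where $L_1,\dots,L_q$ are $(r+1)$-spaces and $F$ is an $r$-space contained in every $L_i$ ($L_i\setminus F$ denotes the set of points of $L_i$ not in $F$). The generalized cylinder conjecture is said to be true for the triple $(v,r,q)$ if every $q^r$-divisible spanning set of $q^{r+1}$ points in $\mathrm{PG}(v-1,q)$ is an $(r+1)$-cylinder. *)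

(* projective geometry PG(v-1,q) over a finite field F with
   q = #|F|, subspaces of F^v represented by row spaces of square matrices. *)
From HB Require Import structures.
From mathcomp Require Import all_boot all_order all_algebra all_fingroup all_field.
Set Implicit Arguments. Unset Strict Implicit. Unset Printing Implicit Defensive.
Import GRing.Theory.
Local Open Scope ring_scope.

Section PG.
Variable F : finFieldType.

(* Points of PG(v-1, q): 1-dimensional subspaces of F^v, each represented by
   its canonical generating matrix <<A>> (so equality of points = equality of
   subspaces). *)
Definition is_point (v : nat) (A : 'M[F]_v) : bool :=
  (\rank A == 1%N) && (<<A>>%MS == A).

Definition point (v : nat) := {A : 'M[F]_v | is_point A}.

Definition incident (v : nat) (P : point v) (X : 'M[F]_v) : bool :=
  (val P <= X)%MS.

Definition spanning (v : nat) (S : {set point v}) : Prop :=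
  (1%:M <= \sum_(P in S) val P)%MS.

Definition divisible (v r : nat) (S : {set point v}) : Prop :=
  forall H : 'M[F]_v, \rank H = (v - 1)%N ->
    #|[set P in S | incident P H]| = #|S| %[mod #|F| ^ r].

(* S (as a multiset with multiplicities 0/1) is an (r+1)-cylinder:
   there are an r-space Fs and (r+1)-spaces L_1..L_q containing Fs such that
   the multiplicity of every point P in S equals the number of i with
   P in L_i \ Fs. *)
Definition cylinder (v r : nat) (S : {set point v}) : Prop :=
  exists (Fs : 'M[F]_v) (L : 'I_#|F| -> 'M[F]_v),
    [/\ \rank Fs = r,
        forall i, \rank (L i) = r.+1 /\ (Fs <= L i)%MS &
        forall P : point v,
          nat_of_bool (P \in S) =
          (\sum_(i < #|F|) ((incident P (L i)) && ~~ incident P Fs))%N].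

Definition GCC (v r : nat) : Prop :=
  forall S : {set point v},
    spanning S -> divisible r S -> #|S| = (#|F| ^ r.+1)%N -> cylinder r S.

End PG.

(* Given a q^r-divisible spanning set S of q^(r+1) points of PG(v-1, q), embed
   F^v into F^(1+v) and form the cone over S with vertex e = (1, 0), with the
   vertex removed:  cone S = { <(a, x)> : <x> in S, a in F }.  It has q^(r+2)
   points, it spans F^(1+v), and it is q^(r+1)-divisible: a hyperplane through
   e meets it in q times the points of S on a hyperplane of F^v, while a
   hyperplane missing e meets each of the |S| punctured lines exactly once.
   Hence cone S is an (r+2)-cylinder.  To come back down, choose a linear
   section x |-> (x g, x) of F^(1+v) whose image does not contain the common
   r+1-space of that cylinder; pulling the cylinder back along it gives an
   (r+1)-cylinder equal to S, since the section meets every punctured line of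
   the cone in exactly its point over <x>. *)
From mathcomp Require Import all_boot all_order all_algebra all_fingroup all_field.
From mathcomp Require Import zify.
Set Implicit Arguments. Unset Strict Implicit. Unset Printing Implicit Defensive.
Import GRing.Theory.
Local Open Scope ring_scope.

Section Points.
Variables (F : finFieldType) (n : nat).

Definition rep (P : point F n) : 'rV[F]_n := nz_row (val P).

Lemma rep_neq0 (P : point F n) : rep P != 0.
Proof. by rewrite /rep nz_row_eq0 -mxrank_eq0; case: P => A /= /andP[/eqP -> _]. Qed.

Lemma rep_val (P : point F n) : val P = <<rep P>>%MS.
Proof.
case: P => A hA /=; have /andP[/eqP rA /eqP gA] := hA.
have := (mxrank_leqif_eq (nz_row_sub A)).2.
rewrite rA rank_rV nz_row_eq0 -mxrank_eq0 rA /= => /esym/genmxP eqA.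
by rewrite /rep /= eqA gA.
Qed.

Lemma incidentE (P : point F n) (X : 'M[F]_n) : incident P X = (rep P <= X)%MS.
Proof. by rewrite /incident rep_val genmxE. Qed.

Lemma rep_inj (P Q : point F n) : (rep P <= rep Q)%MS -> P = Q.
Proof.
move=> sPQ; apply: val_inj; rewrite !rep_val; apply/genmxP.
by have := (mxrank_leqif_eq sPQ).2; rewrite !rank_rV !rep_neq0 => /esym.
Qed.

Lemma is_point_gen (u : 'rV[F]_n) : u != 0 -> is_point <<u>>%MS.
Proof. by move=> u0; rewrite /is_point genmx_id eqxx andbT genmxE rank_rV u0. Qed.

End Points.

Lemma sum_indicator (T : finType) (A : {set T}) (b : pred T) (c : nat) :
  (\sum_(x in A) (if b x then c else 0))%N = (#|[set x in A | b x]| * c)%N.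
Proof.
rewrite -sum_nat_const big_mkcond /= [RHS]big_mkcond /=.
by apply: eq_bigr => x _; rewrite inE; case: (x \in A); case: (b x).
Qed.

Section Sections.
Variables (F : finFieldType) (v : nat).

Definition vertex : 'rV[F]_(1 + v) := row_mx 1 0.

Lemma row_mx_neq0r (a : 'rV[F]_1) (x : 'rV[F]_v) : x != 0 -> row_mx a x != 0.
Proof.
apply: contra => /eqP h.
by have := congr1 rsubmx h; rewrite row_mxKr linear0 => ->.
Qed.

Lemma vertex_neq0 : vertex != 0.
Proof.
apply/eqP => h; have := congr1 lsubmx h; rewrite row_mxKl linear0.
by move/eqP; rewrite oner_eq0.
Qed.

(* The point spanned by a vector u of F^(1+v) (junk value when u = 0). *)
Definition point_of (u : 'rV[F]_(1 + v)) : point F (1 + v) :=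
  insubd (exist _ <<vertex>>%MS (is_point_gen vertex_neq0)) <<u>>%MS.

Lemma point_of_val u : u != 0 -> val (point_of u) = <<u>>%MS.
Proof. by move=> u0; rewrite val_insubd is_point_gen. Qed.

Lemma incident_point_of u X : u != 0 -> incident (point_of u) X = (u <= X)%MS.
Proof. by move=> u0; rewrite /incident point_of_val // genmxE. Qed.

Lemma point_of_eq u w :
  u != 0 -> w != 0 -> point_of u = point_of w -> exists k, u = k *: w.
Proof.
move=> u0 w0 /(congr1 val); rewrite !point_of_val // => /genmxP/andP[s _].
exact/sub_rVP.
Qed.

Definition section (g : 'cV[F]_v) : 'M[F]_(v, 1 + v) := row_mx g 1%:M.

Definition pullback g (X : 'M[F]_(1 + v)) : 'M[F]_v := kermx (section g *m cokermx X).

Lemma sub_pullback g m (B : 'M[F]_(m, v)) X :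
  (B <= pullback g X)%MS = (B *m section g <= X)%MS.
Proof. by rewrite sub_kermx submxE mulmxA. Qed.

Lemma mul_section g (x : 'rV[F]_v) : x *m section g = row_mx (x *m g) x.
Proof. by rewrite /section mul_mx_row mulmx1. Qed.

Lemma section_free g : row_free (section g).
Proof.
rewrite /row_free eqn_leq rank_leq_row /=.
have {1}<- : \rank (section g *m col_mx 0 1%:M) = v.
  by rewrite mul_row_col mulmx0 add0r mulmx1 mxrank1.
exact: mxrankM_maxl.
Qed.

Lemma sub_section g (w : 'rV[F]_(1 + v)) :
  (w <= section g)%MS -> lsubmx w = rsubmx w *m g.
Proof. by case/submxP => D ->; rewrite mul_section row_mxKl row_mxKr. Qed.

Lemma vertex_notin_section g : ~~ (vertex <= section g)%MS.
Proof.
apply/negP => /sub_section; rewrite /vertex row_mxKl row_mxKr mul0mx.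
by move/eqP; rewrite oner_eq0.
Qed.

(* The image of a section is a hyperplane, so pulling back a subspace not
   contained in it lowers the dimension by exactly one. *)
Lemma rank_pullback g X :
  ~~ (X <= section g)%MS -> \rank (pullback g X) = (\rank X).-1.
Proof.
move=> nX.
have rk_cap : \rank (pullback g X) = \rank (section g :&: X).
  rewrite -(mxrankMfree _ (section_free g)); apply/eqmx_rank/andP; split.
    by rewrite sub_capmx submxMl -sub_pullback submx_refl.
  have /submxP [D capE] := capmxSl (section g) X.
  by rewrite capE submxMr // sub_pullback -capE capmxSr.
have rk_sum : \rank (section g + X)%MS = (1 + v)%N.
  have nsub : (section g + X <= section g)%MS = false.
    by apply/negbTE; apply: contra nX => h; apply: submx_trans (addsmxSr _ _) h.
  have := (mxrank_leqif_sup (addsmxSl (section g) X)).2.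
  have := mxrankS (addsmxSl (section g) X).
  rewrite nsub (eqnP (section_free g)) leq_eqVlt => /predU1P[<-|lt] /=.
    by rewrite eqxx.
  by move=> _; apply/anti_leq; rewrite rank_leq_col lt.
have := mxrank_sum_cap (section g) X.
by rewrite rk_cap rk_sum (eqnP (section_free g)); case: (\rank X) => /=; lia.
Qed.

Lemma exists_section_avoiding (w : 'rV[F]_(1 + v)) :
  w != 0 -> exists g, ~~ (w <= section g)%MS.
Proof.
move=> w0; case: (lsubmx w =P 0) => wl; last first.
  by exists 0; apply/negP => /sub_section; rewrite mulmx0.
have wr : rsubmx w != 0.
  by apply: contraNneq w0 => wr; rewrite -(hsubmxK w) wl wr row_mx0.
have /existsP [j wj] : [exists j, rsubmx w 0 j != 0].
  apply: contraNT wr => /existsPn wr0; apply/eqP/matrixP => i j.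
  by rewrite ord1 [RHS]mxE; have := wr0 j; rewrite negbK => /eqP.
exists (delta_mx j 0); apply/negP => /sub_section; rewrite wl -colE.
move/(congr1 (fun M : 'M[F]_1 => M 0 0)); rewrite [in RHS]mxE => wj0.
by move: wj; rewrite -wj0 mxE eqxx.
Qed.

End Sections.

Arguments vertex {F v}.

Section Cone.
Variables (F : finFieldType) (v : nat).

Definition cone_pt (p : point F v * F) : point F (1 + v) :=
  point_of (row_mx p.2%:M (rep p.1)).

Lemma cone_pt_val P a : val (cone_pt (P, a)) = <<row_mx a%:M (rep P)>>%MS.
Proof. by rewrite point_of_val // row_mx_neq0r // rep_neq0. Qed.

Lemma incident_cone_pt P a X :
  incident (cone_pt (P, a)) X = (row_mx a%:M (rep P) <= X)%MS.
Proof. by rewrite /incident cone_pt_val genmxE. Qed.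

(* Distinct pairs give distinct points: the last v coordinates determine P
   and fix the scalar, which then determines a. *)
Lemma cone_pt_inj : injective cone_pt.
Proof.
move=> [P a] [Q b] /point_of_eq; rewrite !row_mx_neq0r ?rep_neq0 //.
case=> // k /=; rewrite scale_row_mx => /eq_row_mx [ea eP].
have PQ : P = Q by apply: rep_inj; apply/sub_rVP; exists k.
subst Q; have k1 : k = 1.
  apply/eqP; rewrite -subr_eq0; apply/eqP.
  have : (k - 1) *: rep P = 0 by rewrite scalerBl -eP scale1r subrr.
  by move/eqP; rewrite scaler_eq0 (negPf (rep_neq0 P)) orbF => /eqP.
move: ea; rewrite k1 scale1r => /(congr1 (fun M : 'M[F]_1 => M 0 0)).
by rewrite !mxE !mulr1n => ->.
Qed.

Lemma row_mx_vertex (a : F) (x : 'rV[F]_v) :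
  row_mx a%:M x = a *: vertex + x *m section 0.
Proof.
by rewrite mul_section mulmx0 /vertex scale_row_mx scalemx1 scaler0 add_row_mx
  addr0 add0r.
Qed.

Lemma fiber_through_vertex P (H : 'M[F]_(1 + v)) : (vertex <= H)%MS ->
  #|[set a : F | incident (cone_pt (P, a)) H]| =
  (if incident P (pullback 0 H) then #|F| else 0)%N.
Proof.
move=> eH.
suff -> : [set a : F | incident (cone_pt (P, a)) H] =
          if incident P (pullback 0 H) then setT else set0.
  by case: ifP; rewrite ?cardsT ?cards0.
apply/setP => a; rewrite [in LHS]inE incident_cone_pt incidentE sub_pullback.
rewrite row_mx_vertex; case: (rep P *m section 0 <= H)%MS / idP => PH.
  by rewrite inE addmx_sub ?scalemx_sub.
rewrite inE; apply/negP => aH; apply: PH.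
rewrite -[_ *m _](addKr (a *: vertex)) addmx_sub //.
by rewrite eqmx_opp scalemx_sub.
Qed.

Lemma fiber_off_vertex P (H : 'M[F]_(1 + v)) :
  \rank H = v -> ~~ (vertex <= H)%MS ->
  #|[set a : F | incident (cone_pt (P, a)) H]| = 1%N.
Proof.
move=> rH eH; pose K := cokermx H.
have rK : \rank K = 1%N by rewrite mxrank_coker rH; lia.
have eK0 : vertex *m K != 0 by rewrite -submxE.
have KeK : (K <= vertex *m K)%MS.
  have := (mxrank_leqif_sup (submxMl vertex K)).2.
  by rewrite rank_rV eK0 rK eqxx => /esym.
have /sub_rVP [mu Pmu] : (rep P *m section 0 *m K <= vertex *m K)%MS.
  exact: submx_trans (submxMl _ _) KeK.
suff -> : [set a : F | incident (cone_pt (P, a)) H] = [set - mu] by rewrite cards1.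
apply/setP => a; rewrite !inE incident_cone_pt row_mx_vertex submxE.
rewrite mulmxDl -scalemxAl Pmu -scalerDl scaler_eq0 (negPf eK0) orbF.
by rewrite addr_eq0.
Qed.

Variable S : {set point F v}.

Definition cone : {set point F (1 + v)} := cone_pt @: setX S [set: F].

Lemma card_cone_pred (h : pred (point F (1 + v))) :
  #|[set Q in cone | h Q]| =
  (\sum_(P in S) #|[set a : F | h (cone_pt (P, a))]|)%N.
Proof.
have -> : [set Q in cone | h Q] = cone_pt @: [set p in setX S setT | h (cone_pt p)].
  apply/setP => Q; rewrite inE; apply/andP/imsetP.
  - by case=> /imsetP[p pS ->] hp; exists p => //; rewrite inE pS.
  - by case=> p; rewrite inE => /andP[pS hp] ->; split => //; apply: imset_f.
rewrite card_imset; last exact: cone_pt_inj.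
rewrite -sum1_card (eq_bigl (fun p => (p.1 \in S) && h (cone_pt (p.1, p.2)))).
  rewrite -(pair_big_dep (fun P => P \in S) (fun P a => h (cone_pt (P, a)))
                         (fun _ _ => 1%N)).
  by apply: eq_bigr => P _; rewrite -sum1_card; apply: eq_bigl => a; rewrite inE.
by case=> P a; rewrite !inE andbT.
Qed.

Lemma card_cone : #|cone| = (#|S| * #|F|)%N.
Proof. by rewrite card_imset ?cardsX ?cardsT //; apply: cone_pt_inj. Qed.

(* The cone over a nonempty spanning set spans: it contains the vertex
   (difference of two points on one punctured line) and lifts of all of S. *)
Lemma spanning_cone : spanning S -> S != set0 -> spanning cone.
Proof.
move=> spanS /set0Pn [P0 P0S]; rewrite /spanning.
set C := (\sum_(Q in cone) val Q)%MS.
have coneC P a : P \in S -> (row_mx a%:M (rep P) <= C)%MS.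
  move=> PS; apply: (sumsmx_sup (cone_pt (P, a))).
    by apply: imset_f; rewrite !inE PS.
  by rewrite cone_pt_val genmxE.
have vertexC : (vertex <= C)%MS.
  have -> : vertex = row_mx 1%:M (rep P0) - row_mx 0%:M (rep P0).
    by rewrite !row_mx_vertex scale1r scale0r add0r addrK.
  by rewrite addmx_sub ?eqmx_opp ?coneC.
have sectionC (x : 'rV[F]_v) : (x *m section 0 <= C)%MS.
  rewrite -sub_pullback; apply: submx_trans (submx1 x) _.
  apply: submx_trans spanS _; apply/sumsmx_subP => P PS.
  rewrite sub_pullback rep_val (eqmxMr _ (genmxE _)) mul_section mulmx0.
  by have := coneC P 0 PS; rewrite raddf0.
apply/row_subP => i; rewrite -[row i _]hsubmxK (mx11_scalar (lsubmx _)) row_mx_vertex.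
by rewrite addmx_sub ?scalemx_sub.
Qed.

Lemma divisible_cone r : divisible r S -> #|S| = (#|F| ^ r.+1)%N ->
  divisible r.+1 cone.
Proof.
move=> divS cardS H rH; rewrite card_cone_pred card_cone.
have rH' : \rank H = v by rewrite rH; lia.
have [eH | eH] := boolP (vertex <= H)%MS.
  have nH : ~~ (H <= section 0)%MS.
    by apply: contra (vertex_notin_section 0) => h; apply: submx_trans eH h.
  rewrite (eq_bigr _ (fun P _ => fiber_through_vertex P eH)) sum_indicator.
  by rewrite expnSr -!muln_modl divS // rank_pullback // rH'; lia.
rewrite (eq_bigr _ (fun P _ => fiber_off_vertex P rH' eH)) sum_nat_const muln1.
by rewrite cardS modnn modnMr.
Qed.

Lemma section_in_cone g (P : point F v) :
  (point_of (rep P *m section g) \in cone) = (P \in S).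
Proof.
have -> : point_of (rep P *m section g) = cone_pt (P, (rep P *m g) 0 0).
  by rewrite /cone_pt mul_section -mx11_scalar.
apply/imsetP/idP => [[[Q a]] | PS].
  by rewrite inE => /andP[QS _] /cone_pt_inj [-> _].
by exists (P, (rep P *m g) 0 0); rewrite // !inE PS.
Qed.

Lemma incident_pullback g (P : point F v) X :
  incident P (pullback g X) = incident (point_of (rep P *m section g)) X.
Proof.
by rewrite incidentE sub_pullback incident_point_of // mul_section
  row_mx_neq0r // rep_neq0.
Qed.

(* If the cone is an (r+2)-cylinder, pulling its defining subspaces back
   along a section avoiding the common (r+1)-space exhibits S as an
   (r+1)-cylinder. *)
Lemma cylinder_of_cone r : cylinder r.+1 cone -> cylinder r S.
Proof.
case=> Fs [L [rFs rL_sub mult]].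
have Fs0 : nz_row Fs != 0 by rewrite nz_row_eq0 -mxrank_eq0 rFs.
have [g gFs] := exists_section_avoiding Fs0.
have nFs : ~~ (Fs <= section g)%MS.
  by apply: contra gFs => h; apply: submx_trans (nz_row_sub _) h.
exists (pullback g Fs), (fun i => pullback g (L i)); split.
- by rewrite rank_pullback // rFs.
- move=> i; have [rL sL] := rL_sub i; split.
    rewrite rank_pullback ?rL //.
    by apply: contra nFs => h; apply: submx_trans sL h.
  by rewrite sub_pullback; apply: submx_trans sL; rewrite -sub_pullback.
- move=> P; rewrite -(section_in_cone g) mult.
  by apply: eq_bigr => i _; rewrite !incident_pullback.
Qed.

End Cone.

Theorem mainTheorem6 (F : finFieldType) (v r : nat) :
  (1 <= v)%N -> (1 <= r)%N -> GCC F v.+1 r.+1 -> GCC F v r.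
Proof.
move=> _ _ gcc S spanS divS cardS.
have q_gt0 : (0 < #|F|)%N by apply/card_gt0P; exists 0.
have S0 : S != set0 by rewrite -card_gt0 cardS expn_gt0 q_gt0.
apply: (cylinder_of_cone (S := S)); apply: (gcc (cone S)).
- exact: spanning_cone.
- exact: divisible_cone.
- by rewrite card_cone cardS -expnSr.
Qed.
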